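(* Let $\phi$ be a formula of $\mathsf{BSML}^{\sqcup}$ or of $\mathsf{BSML}^{\oslash}$. If $\phi$ is not valid, then there is a model $M=(W,R,V)$ with $W$ finite and a state $s\subseteq W$ such that $M,s\not\models\phi$.
   Context: Formulas: $\phi ::= p \mid \neg\phi \mid (\phi\wedge\phi) \mid (\phi\vee\phi) \mid \Diamond\phi \mid \mathrm{NE}$ for $\mathsf{BSML}$; $\mathsf{BSML}^{\sqcup}$ adds $\phi\sqcup\phi$, $\mathsf{BSML}^{\oslash}$ adds $\oslash\phi$. Models $M=(W,R,V)$: $W\ne\emptyset$, $R\subseteq W\times W$, $V$ a valuation; states are subsets of $W$; $R[w]=\{v:wRv\}$. Support/anti-support: $s\models p$ iff $s\subseteq V(p)$; $s\dashv p$ iff $s\cap V(p)=\emptyset$; $s\models\mathrm{NE}$ iff $s\ne\emptyset$; $s\dashv\mathrm{NE}$ iff $s=\emptyset$; $s\models\neg\phi$ iff $s\dashv\phi$; $s\dashv\neg\phi$ iff $s\models\phi$; $s\models\phi\wedge\psi$ iff both; $s\dashv\phi\wedge\psi$ iff $s=t\cup u$ with $t\dashv\phi$, $u\dashv\psi$; $s\models\phi\vee\psi$ iff $s=t\cup u$ with $t\models\phi$, $u\models\psi$; $s\dashv\phi\vee\psi$ iff $s\dashv\phi$ and $s\dashv\psi$; $s\models\phi\sqcup\psi$ iff $s\models\phi$ or $s\models\psi$; $s\dashv\phi\sqcup\psi$ iff $s\dashv\phi$ and $s\dashv\psi$; $s\models\Diamond\phi$ iff each $w\in s$ has a nonempty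 $t\subseteq R[w]$ with $t\models\phi$; $s\dashv\Diamond\phi$ iff $R[w]\dashv\phi$ for all $w\in s$; $s\models\oslash\phi$ iff $s\models\phi$ or $s=\emptyset$; $s\dashv\oslash\phi$ iff $s\dashv\phi$. $\phi$ is valid if $M,s\models\phi$ for every model $M$ and every state $s$ on $M$. *)

(* Bilateral state-based modal logic BSML with global
   disjunction (gor, ⊔) and emptiness operator (oslash, ⊘). *)
From Stdlib Require Import FinFun.

Inductive form : Type :=
| Var : nat -> form
| Neg : form -> form
| And : form -> form -> form
| Or  : form -> form -> form
| Dia : form -> form
| NE  : form
| Gor : form -> form -> form
| Osl : form -> form.

Fixpoint in_BSML_gor (f : form) : Prop :=
  match f with
  | Var _ | NE => True
  | Neg a | Dia a => in_BSML_gor a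
  | And a b | Or a b | Gor a b => in_BSML_gor a /\ in_BSML_gor b
  | Osl _ => False
  end.

Fixpoint in_BSML_osl (f : form) : Prop :=
  match f with
  | Var _ | NE => True
  | Neg a | Dia a | Osl a => in_BSML_osl a
  | And a b | Or a b => in_BSML_osl a /\ in_BSML_osl b
  | Gor _ _ => False
  end.

(* A model on carrier W (nonemptiness of W is required separately). *)
Record model (W : Type) := Model {
  rel : W -> W -> Prop;
  val : nat -> W -> Prop
}.
Arguments rel {W} _ _ _.
Arguments val {W} _ _ _.

Definition state (W : Type) := W -> Prop.

Definition is_union {W : Type} (s t u : state W) : Prop :=
  forall w, s w <-> (t w \/ u w).

Section Sem.
Context {W : Type} (M : model W).

Fixpoint supp (s : state W) (f : form) {struct f} : Prop :=
  match f with
  | Var p => forall w, s w -> val M p w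
  | Neg a => anti s a
  | And a b => supp s a /\ supp s b
  | Or a b => exists t u, is_union s t u /\ supp t a /\ supp u b
  | Dia a => forall w, s w ->
       exists t : state W, (exists v, t v) /\ (forall v, t v -> rel M w v)
                           /\ supp t a
  | NE => exists w, s w
  | Gor a b => supp s a \/ supp s b
  | Osl a => supp s a \/ (forall w, ~ s w)
  end
with anti (s : state W) (f : form) {struct f} : Prop :=
  match f with
  | Var p => forall w, s w -> ~ val M p w
  | Neg a => supp s a
  | And a b => exists t u, is_union s t u /\ anti t a /\ anti u b
  | Or a b => anti s a /\ anti s b
  | Dia a => forall w, s w -> anti (fun v => rel M w v) a
  | NE => forall w, ~ s w
  | Gor a b => anti s a /\ anti s b
  | Osl a => anti s a
  end.
End Sem.

Definition valid (f : form) : Prop :=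
  forall (W : Type) (M : model W), inhabited W -> forall s : state W, supp M s f.

(* Support and anti-support of a formula only depend on the (n, P)-bisimilarity
   type of the state, where n is the modal depth of the formula and P its set of
   propositional letters.  For finite P, n-bisimilarity has finitely many classes
   on any model, so collapsing a countermodel along a finite partition that
   partition_bys it yields a finite countermodel. *)
From Stdlib Require Import FinFun.
From Stdlib Require Import List Lia Classical ClassicalEpsilon.
Import ListNotations.

Fixpoint modal_depth (f : form) : nat :=
  match f with
  | Var _ | NE => 0
  | Neg a | Osl a => modal_depth a
  | And a b | Or a b | Gor a b => Nat.max (modal_depth a) (modal_depth b)
  | Dia a => S (modal_depth a)
  end.

Fixpoint prop_vars (f : form) : list nat :=
  match f with
  | Var p => [p]
  | NE => []
  | Neg a | Osl a | Dia a => prop_vars a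
  | And a b | Or a b | Gor a b => prop_vars a ++ prop_vars b
  end.

Fixpoint bisim (P : list nat) {W1 W2 : Type} (M1 : model W1) (M2 : model W2)
  (k : nat) (w : W1) (x : W2) : Prop :=
  (forall p, In p P -> (val M1 p w <-> val M2 p x)) /\
  match k with
  | 0 => True
  | S j => (forall v, rel M1 w v -> exists y, rel M2 x y /\ bisim P M1 M2 j v y) /\
           (forall y, rel M2 x y -> exists v, rel M1 w v /\ bisim P M1 M2 j v y)
  end.

Lemma bisim_val P {W1 W2} (M1 : model W1) (M2 : model W2) k w x :
  bisim P M1 M2 k w x -> forall p, In p P -> (val M1 p w <-> val M2 p x).
Proof. destruct k; simpl; tauto. Qed.

Lemma bisim_sym P {W1 W2} (M1 : model W1) (M2 : model W2) k :
  forall w x, bisim P M1 M2 k w x -> bisim P M2 M1 k x w.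
Proof.
  induction k as [|k IH]; simpl; intros w x [Hval Hsucc]; split.
  - intros p Hp; symmetry; auto.
  - exact I.
  - intros p Hp; symmetry; auto.
  - destruct Hsucc as [Hforth Hback]; split.
    + intros y Hy; destruct (Hback y Hy) as [v [? ?]]; eauto.
    + intros v Hv; destruct (Hforth v Hv) as [y [? ?]]; eauto.
Qed.

Lemma bisim_trans P {W1 W2 W3} (M1 : model W1) (M2 : model W2) (M3 : model W3) k :
  forall a b c, bisim P M1 M2 k a b -> bisim P M2 M3 k b c -> bisim P M1 M3 k a c.
Proof.
  induction k as [|k IH]; simpl; intros a b c [Hval1 Hsucc1] [Hval2 Hsucc2]; split.
  - intros p Hp; rewrite Hval1 by auto; auto.
  - exact I.
  - intros p Hp; rewrite Hval1 by auto; auto.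
  - destruct Hsucc1 as [Hforth1 Hback1], Hsucc2 as [Hforth2 Hback2]; split.
    + intros v Hv; destruct (Hforth1 v Hv) as [y [Hy Hvy]].
      destruct (Hforth2 y Hy) as [z [? ?]]; eauto.
    + intros z Hz; destruct (Hback2 z Hz) as [y [Hy Hyz]].
      destruct (Hback1 y Hy) as [v [? ?]]; eauto.
Qed.

Lemma bisim_le P {W1 W2} (M1 : model W1) (M2 : model W2) :
  forall j k w x, j <= k -> bisim P M1 M2 k w x -> bisim P M1 M2 j w x.
Proof.
  induction j as [|j IH]; intros [|k] w x Hjk [Hval Hsucc]; try lia; simpl.
  - tauto.
  - tauto.
  - destruct Hsucc as [Hforth Hback]; split; [exact Hval | split].
    + intros v Hv; destruct (Hforth v Hv) as [y [Hy Hvy]].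
      exists y; split; [exact Hy | apply (IH k); [lia | exact Hvy]].
    + intros y Hy; destruct (Hback y Hy) as [v [Hv Hvy]].
      exists v; split; [exact Hv | apply (IH k); [lia | exact Hvy]].
Qed.

Section StateBisimulation.
Context (P : list nat) {W1 W2 : Type} (M1 : model W1) (M2 : model W2).

Definition state_bisim (j : nat) (s : state W1) (s' : state W2) : Prop :=
  (forall w, s w -> exists x, s' x /\ bisim P M1 M2 j w x) /\
  (forall x, s' x -> exists w, s w /\ bisim P M1 M2 j w x).

Lemma state_bisim_nonempty j s s' :
  state_bisim j s s' -> (exists w, s w) -> exists x, s' x.
Proof. intros [Hforth _] [w Hw]; destruct (Hforth w Hw) as [x [? _]]; eauto. Qed.

Lemma state_bisim_empty j s s' :
  state_bisim j s s' -> (forall w, ~ s w) -> forall x, ~ s' x.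
Proof. intros [_ Hback] Hs x Hx; destruct (Hback x Hx) as [w [Hw _]]; exact (Hs w Hw). Qed.

Lemma state_bisim_restrict j s s' (t : state W1) :
  state_bisim j s s' -> (forall w, t w -> s w) ->
  state_bisim j t (fun x => s' x /\ exists w, t w /\ bisim P M1 M2 j w x).
Proof.
  intros [Hforth _] Hts; split.
  - intros w Hw; destruct (Hforth w (Hts w Hw)) as [x [Hx Hwx]].
    exists x; split; [split; [exact Hx | exists w; auto] | exact Hwx].
  - intros x [_ [w [? ?]]]; eauto.
Qed.

Lemma state_bisim_union j s s' t u :
  state_bisim j s s' -> is_union s t u ->
  exists t' u', is_union s' t' u' /\ state_bisim j t t' /\ state_bisim j u u'.
Proof.
  intros Hss' Hstu.
  exists (fun x => s' x /\ exists w, t w /\ bisim P M1 M2 j w x),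
         (fun x => s' x /\ exists w, u w /\ bisim P M1 M2 j w x).
  split; [|split; apply (state_bisim_restrict j s s'); auto; intros w Hw; apply Hstu; auto].
  intros x; split.
  - intros Hx; destruct (proj2 Hss' x Hx) as [w [Hw Hwx]].
    destruct (proj1 (Hstu w) Hw); [left | right]; eauto.
  - intros [[? _] | [? _]]; assumption.
Qed.

Lemma state_bisim_successors j w x :
  bisim P M1 M2 (S j) w x -> state_bisim j (rel M1 w) (rel M2 x).
Proof. intros [_ Hsucc]; exact Hsucc. Qed.

Lemma bisim_invariance (a : form) :
  forall j s s', incl (prop_vars a) P -> modal_depth a <= j ->
  state_bisim j s s' -> (supp M1 s a -> supp M2 s' a) /\ (anti M1 s a -> anti M2 s' a).
Proof.
  induction a as [p | a IH | a IHa b IHb | a IHa b IHb | a IH | | a IHa b IHb | a IH];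
    intros j s s' HP Hdepth Hss'; simpl in HP, Hdepth |- *.
  - destruct Hss' as [_ Hback]; split; intros Hs x Hx;
      destruct (Hback x Hx) as [w [Hw Hwx]];
      rewrite <- (bisim_val _ _ _ _ _ _ Hwx p) by (apply HP; left; reflexivity); auto.
  - destruct (IH j s s' HP Hdepth Hss'); tauto.
  - destruct (incl_app_inv _ _ HP) as [HPa HPb].
    split.
    + intros [Ha Hb]; split;
        [apply (IHa j s s') | apply (IHb j s s')]; auto; lia.
    + intros [t [u [Hstu [Ht Hu]]]].
      destruct (state_bisim_union j s s' t u Hss' Hstu) as [t' [u' [Hs'tu [Htt' Huu']]]].
      exists t', u'; split; [exact Hs'tu | split;
        [apply (IHa j t t') | apply (IHb j u u')]; auto; lia].
  - destruct (incl_app_inv _ _ HP) as [HPa HPb].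
    split.
    + intros [t [u [Hstu [Ht Hu]]]].
      destruct (state_bisim_union j s s' t u Hss' Hstu) as [t' [u' [Hs'tu [Htt' Huu']]]].
      exists t', u'; split; [exact Hs'tu | split;
        [apply (IHa j t t') | apply (IHb j u u')]; auto; lia].
    + intros [Ha Hb]; split;
        [apply (IHa j s s') | apply (IHb j s s')]; auto; lia.
  - destruct j as [|j]; [lia|].
    split; intros Hs x Hx; destruct (proj2 Hss' x Hx) as [w [Hw Hwx]];
      pose proof (state_bisim_successors j w x Hwx) as Hsucc.
    + destruct (Hs w Hw) as [t [Hne [Htw Ht]]].
      pose proof (state_bisim_restrict j _ _ t Hsucc Htw) as Htt'.
      eexists; split; [exact (state_bisim_nonempty j _ _ Htt' Hne) | split].
      * intros y [Hy _]; exact Hy.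
      * apply (IH j t); auto; lia.
    + apply (IH j (rel M1 w)); auto; lia.
  - split.
    + apply state_bisim_nonempty with (1 := Hss').
    + apply state_bisim_empty with (1 := Hss').
  - destruct (incl_app_inv _ _ HP) as [HPa HPb].
    destruct (IHa j s s' HPa ltac:(lia) Hss'), (IHb j s s' HPb ltac:(lia) Hss'); tauto.
  - destruct (IH j s s' HP Hdepth Hss'); split; [|tauto].
    intros [Ha | Hempty]; [left | right]; auto.
    exact (state_bisim_empty j s s' Hss' Hempty).
Qed.

End StateBisimulation.

Definition covers {W} (L : list (W -> Prop)) : Prop :=
  forall w, exists C, In C L /\ C w.

Definition cells_within {W} (R : W -> W -> Prop) (L : list (W -> Prop)) : Prop :=
  forall C a b, In C L -> C a -> C b -> R a b.

Fixpoint partition_by {W} (Q : list (W -> Prop)) : list (W -> Prop) :=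
  match Q with
  | [] => [fun _ => True]
  | q :: Q' => flat_map (fun C => [fun w => C w /\ q w; fun w => C w /\ ~ q w]) (partition_by Q')
  end.

Lemma partition_by_covers {W} (Q : list (W -> Prop)) : covers (partition_by Q).
Proof.
  intros w; induction Q as [|q Q [C [HC HCw]]]; simpl.
  - exists (fun _ => True); auto.
  - destruct (classic (q w)) as [Hq | Hq];
      [exists (fun w => C w /\ q w) | exists (fun w => C w /\ ~ q w)];
      (split; [apply in_flat_map; exists C; simpl; auto | auto]).
Qed.

Lemma partition_by_cells {W} (Q : list (W -> Prop)) :
  cells_within (fun a b => forall q, In q Q -> (q a <-> q b)) (partition_by Q).
Proof.
  induction Q as [|q Q IH]; simpl; intros D a b HD Ha Hb.
  - contradiction.
  - apply in_flat_map in HD; destruct HD as [C [HC [HD | [HD | []]]]]; subst D;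
      destruct Ha as [Ha Hqa], Hb as [Hb Hqb];
      intros q' [<- | Hq']; try tauto; exact (IH C a b HC Ha Hb q' Hq').
Qed.

(* Worlds agreeing on [P] and on which cells of a partition within
   k-bisimilarity they can reach are (S k)-bisimilar. *)
Lemma bisim_finite_partition {W} (M : model W) (P : list nat) k :
  exists L, covers L /\ cells_within (bisim P M M k) L.
Proof.
  induction k as [|k [L [Lcov Lcells]]].
  - exists (partition_by (map (val M) P)); split; [apply partition_by_covers|].
    intros C a b HC Ha Hb; split; [|exact I].
    intros p Hp; apply (partition_by_cells _ C a b HC Ha Hb), in_map; exact Hp.
  - exists (partition_by (map (val M) P ++ map (fun C w => exists v, rel M w v /\ C v) L)).
    split; [apply partition_by_covers|].
    intros D a b HD Ha Hb.
    pose proof (partition_by_cells _ D a b HD Ha Hb) as Hagree.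
    assert (Hdia : forall C, In C L ->
              (exists v, rel M a v /\ C v) <-> (exists v, rel M b v /\ C v)).
    { intros C HC; apply (Hagree (fun w => exists v, rel M w v /\ C v)).
      apply in_or_app; right; apply (in_map (fun C w => exists v, rel M w v /\ C v)), HC. }
    split; [|split].
    + intros p Hp; apply Hagree, in_or_app; left; apply in_map, Hp.
    + intros v Hv; destruct (Lcov v) as [C [HC Hcv]].
      destruct (proj1 (Hdia C HC) (ex_intro _ v (conj Hv Hcv))) as [y [Hy Hcy]].
      exists y; split; [exact Hy | exact (Lcells C v y HC Hcv Hcy)].
    + intros y Hy; destruct (Lcov y) as [C [HC Hcy]].
      destruct (proj2 (Hdia C HC) (ex_intro _ y (conj Hy Hcy))) as [v [Hv Hcv]].
      exists v; split; [exact Hv | exact (Lcells C v y HC Hcv Hcy)].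
Qed.

Lemma finite_index {W} (R : W -> W -> Prop) (L : list (W -> Prop)) :
  covers L -> cells_within R L ->
  exists n (f : W -> Fin.t n), forall a b, f a = f b -> R a b.
Proof.
  intros Lcov Lcells.
  assert (Hindex : forall w, exists i : Fin.t (length L),
             nth (proj1_sig (Fin.to_nat i)) L (fun _ => False) w).
  { intros w; destruct (Lcov w) as [C [HC Hw]].
    destruct (In_nth L C (fun _ => False) HC) as [i [Hi Hnth]].
    exists (Fin.of_nat_lt Hi); rewrite Fin.to_nat_of_nat; simpl; rewrite Hnth; exact Hw. }
  exists (length L), (fun w => proj1_sig (constructive_indefinite_description _ (Hindex w))).
  intros a b Hab.
  destruct (constructive_indefinite_description _ (Hindex a)) as [i Hi],
           (constructive_indefinite_description _ (Hindex b)) as [j Hj].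
  simpl in Hab; subst j.
  eapply Lcells; [apply nth_In, (proj2_sig (Fin.to_nat i)) | exact Hi | exact Hj].
Qed.

Section Quotient.
Context {W V : Type} (M : model W) (f : W -> V).

Definition quotient_model : model V :=
  Model V (fun i i' => exists a b, f a = i /\ f b = i' /\ rel M a b)
          (fun p i => exists a, f a = i /\ val M p a).

Definition image_state (s : state W) : state V := fun i => exists w, s w /\ f w = i.

Context (P : list nat) (k : nat) (Hf : forall a b, f a = f b -> bisim P M M k a b).

Lemma quotient_bisim j : j <= k -> forall w, bisim P M quotient_model j w (f w).
Proof.
  induction j as [|j IH]; intros Hj w; simpl; split.
  1, 3: intros p Hp; split;
          [intros Hval; exists w; auto
          | intros [a [Ha Hval]]; apply (bisim_val _ _ _ _ _ _ (Hf a w Ha)); auto].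
  - exact I.
  - split.
    + intros v Hv; exists (f v); split; [exists w, v; auto | apply IH; lia].
    + intros y [a [b [Ha [<- Hab]]]].
      assert (Haw : bisim P M M (S j) a w) by (apply (bisim_le P M M (S j) k); auto).
      destruct Haw as [_ [Hforth _]], (Hforth b Hab) as [v [Hv Hbv]].
      exists v; split; [exact Hv|].
      apply (bisim_trans P M M quotient_model j v b (f b)); [apply bisim_sym, Hbv | apply IH; lia].
Qed.

Lemma state_bisim_image s : state_bisim P quotient_model M k (image_state s) s.
Proof.
  split.
  - intros i [w [Hw <-]]; exists w; split; [exact Hw | apply bisim_sym, quotient_bisim; auto].
  - intros w Hw; exists (f w); split; [exists w; auto | apply bisim_sym, quotient_bisim; auto].
Qed.

End Quotient.

Lemma not_valid_countermodel (phi : form) :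
  ~ valid phi -> exists W (M : model W) (s : state W), inhabited W /\ ~ supp M s phi.
Proof.
  intros Hnv; apply NNPP; intros Hno; apply Hnv.
  intros W M HW s; apply NNPP; intros Hs; apply Hno; eauto.
Qed.

Theorem proposition3p21 (phi : form) :
  (in_BSML_gor phi \/ in_BSML_osl phi) ->
  ~ valid phi ->
  exists (W : Type) (M : model W) (s : state W),
    inhabited W /\ Finite W /\ ~ supp M s phi.
Proof.
  intros _ Hnv.
  destruct (not_valid_countermodel phi Hnv) as [W [M [s [[w0] Hns]]]].
  set (P := prop_vars phi); set (k := modal_depth phi).
  destruct (bisim_finite_partition M P k) as [L [Lcov Lcells]].
  destruct (finite_index _ L Lcov Lcells) as [n [f Hf]].
  exists (Fin.t n), (quotient_model M f), (image_state f s).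
  split; [exact (inhabits (f w0)) | split; [apply Fin_Finite |]].
  intros Hs; apply Hns.
  apply (bisim_invariance P (quotient_model M f) M phi k (image_state f s) s);
    [apply incl_refl | auto | apply (state_bisim_image M f P k Hf) | exact Hs].
Qed.
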